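(* For all $u\le v\in\mathbb{Z}^2$ and $\lambda\in(0,1)$: on the event $E_{\rightarrow}(\lambda;u,v)$, the path $\pi_-(u,v)$ is above $\pi_-(\lambda;u,v)$; and on the event $E_{\uparrow}(\lambda;u,v)$, the path $\pi_+(\lambda;u,v)$ is above $\pi_+(u,v)$.
   Context: Fix $p\in(0,1)$; bulk weights $(\omega_x)_{x\in\mathbb{Z}^2}$ i.i.d. with $\mathbb{P}(\omega_x=k)=p(1-p)^k$, $k\ge0$. $\mathbf{e}_1=(1,0),\mathbf{e}_2=(0,1),\mathbf{e}_+=(1,1)$; $u\le v$ coordinatewise; $R_{u,v}=[u_1,v_1]\times[u_2,v_2]$; $H_x=\mathbb{R}\times\{x_2\}$, $V_x=\{x_1\}\times\mathbb{R}$. Directed paths use steps $\mathbf{e}_1,\mathbf{e}_2$; $T(x,y)$ is the maximal weight $\sum_{z\in\gamma}\omega_z$ over directed paths from $x$ to $y$. Boundary weights for $\lambda\in(0,1)$: let $q(\lambda)=\frac{p\lambda+p\sqrt{(1-p)\lambda(1-\lambda)}}{1-p+p\lambda+2\sqrt{(1-p)\lambda(1-\lambda)}}$, $p_H=q(\lambda)$, $p_V=1-\frac{1-p}{1-q(\lambda)}$. For a base vertex $u$, take $(\omega^V_{u+j\mathbf{e}_2}(\lambda))_{j\in\mathbb{Z}}$ i.i.d. geometric with parameter $p_V$ independent of the bulk, set $L(u)=0$, $L(u+j\mathbf{e}_2)-L(u+(j-1)\mathbf{e}_2)=\omega^V_{u+j\mathbf{e}_2}(\lambda)$, for $x\in u+\mathbb{Z}_{>0}\times\mathbb{Z}$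 let $L(x)=\sup_{j\le x_2-u_2}[L(u+j\mathbf{e}_2)+T(u+\mathbf{e}_1+j\mathbf{e}_2,x)]$, and $\omega^H_x(\lambda)=L(x)-L(x-\mathbf{e}_1)$, $\omega^V_x(\lambda)=L(x)-L(x-\mathbf{e}_2)$. The law of $(\omega_x,\omega^H_x(\lambda),\omega^V_x(\lambda))$ converges as $u=(-m,-m)$, $m\to\infty$, to a law on all of $\mathbb{Z}^2$ whose restriction to each $u+\mathbb{Z}_{\ge0}^2$ agrees with the construction based at $u$; we work under this full-plane law. For a directed path $\gamma$ from $x$ to $y$, $T(\lambda;\gamma)=\sum_{z\in\gamma\cap H_x\setminus\{x\}}\omega^H_z(\lambda)+\sum_{z\in\gamma\cap V_x\setminus\{x\}}\omega^V_z(\lambda)+\sum_{z\in\gamma\cap R_{x+\mathbf{e}_+,y}}\omega_z$; $T(\lambda;x,y)$ is its maximum over directed paths from $x$ to $y$, and maximizers are $\lambda$-geodesics. A path $\gamma$ is above $\gamma'$ if for every vertical line $V$ meeting both, $\min(\gamma\cap V)\ge\min(\gamma'\cap V)$. $\pi_+(u,v)$, $\pi_-(u,v)$ are the upmost (above all others) and downmost geodesics for $T(u,v)$, and $\pi_\pm(\lambda;u,v)$ the analogous $\lambda$-geodesics. $E_{\rightarrow}(\lambda;u,v)=\{u+\mathbf{e}_1\in\pi_-(\lambda;u,v)\}$, $E_{\uparrow}(\lambda;u,v)=\{u+\mathbf{e}_2\in\pi_+(\lambda;u,v)\}$. *)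

From Stdlib Require Import ZArith List.
Import ListNotations.
Open Scope Z_scope.

Definition pt := (Z * Z)%type.
Definition e1 : pt := (1, 0).
Definition e2 : pt := (0, 1).
Definition padd (x y : pt) : pt := (fst x + fst y, snd x + snd y).
Definition psub (x y : pt) : pt := (fst x - fst y, snd x - snd y).

Definition ple (u v : pt) : Prop := fst u <= fst v /\ snd u <= snd v.

Fixpoint steps_ok (g : list pt) : Prop :=
  match g with
  | a :: ((b :: _) as t) => (b = padd a e1 \/ b = padd a e2) /\ steps_ok t
  | _ => True
  end.

Definition dpath (x y : pt) (g : list pt) : Prop :=
  head g = Some x /\ last g x = y /\ steps_ok g.

Definition bulk_weight (om : pt -> Z) (g : list pt) : Z :=
  fold_right (fun z s => om z + s) 0 g.

(* stationary boundary weights derived from the stationary LPP field L *)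
Definition omH (L : pt -> Z) (x : pt) : Z := L x - L (psub x e1).
Definition omV (L : pt -> Z) (x : pt) : Z := L x - L (psub x e2).

(* weight contributed by vertex z to T(lambda; gamma) for a path starting at x:
   z on H_x\{x} -> omega^H, z on V_x\{x} -> omega^V, z in R_{x+e_+,y} -> omega,
   and x itself contributes nothing *)
Definition lam_vertex (om : pt -> Z) (L : pt -> Z) (x z : pt) : Z :=
  if Z.eqb (snd z) (snd x) then (if Z.eqb (fst z) (fst x) then 0 else omH L z)
  else if Z.eqb (fst z) (fst x) then omV L z
  else om z.

Definition lam_weight (om : pt -> Z) (L : pt -> Z) (x : pt) (g : list pt) : Z :=
  fold_right (fun z s => lam_vertex om L x z + s) 0 g.

Definition geodesic (om : pt -> Z) (x y : pt) (g : list pt) : Prop :=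
  dpath x y g /\
  forall g', dpath x y g' -> bulk_weight om g' <= bulk_weight om g.

Definition lam_geodesic (om L : pt -> Z) (x y : pt) (g : list pt) : Prop :=
  dpath x y g /\
  forall g', dpath x y g' -> lam_weight om L x g' <= lam_weight om L x g.

(* g is above g': on every vertical line meeting both,
   min (g ∩ V) >= min (g' ∩ V) *)
Definition above (g g' : list pt) : Prop :=
  forall a b b', In (a, b) g -> In (a, b') g' ->
    exists b'', In (a, b'') g' /\ b'' <= b.

Definition upmost_geod (om : pt -> Z) (x y : pt) (g : list pt) : Prop :=
  geodesic om x y g /\ forall g', geodesic om x y g' -> above g g'.
Definition downmost_geod (om : pt -> Z) (x y : pt) (g : list pt) : Prop :=
  geodesic om x y g /\ forall g', geodesic om x y g' -> above g' g.
Definition upmost_lam_geod (om L : pt -> Z) (x y : pt) (g : list pt) : Prop :=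
  lam_geodesic om L x y g /\ forall g', lam_geodesic om L x y g' -> above g g'.
Definition downmost_lam_geod (om L : pt -> Z) (x y : pt) (g : list pt) : Prop :=
  lam_geodesic om L x y g /\ forall g', lam_geodesic om L x y g' -> above g' g.

(* Under the full-plane law of (omega, omega^H(lambda), omega^V(lambda)) this
   holds almost surely. *)
Definition stationary_config (om L : pt -> Z) : Prop :=
  forall x, L x = om x + Z.max (L (psub x e1)) (L (psub x e2)).

(* On every antidiagonal, keep the lower, resp. upper, of the vertices of
   [pi] and [pil]: this yields two directed paths from [u] to [v] whose bulk
   weights add up to those of [pi] and [pil].  As [pi] is a geodesic, the
   upper path weighs at most [pi], so the lower one weighs at least [pil].
   The lambda-weight exceeds the bulk weight by an excess which is
   nonnegative away from [u] (stationarity gives [omega^H, omega^V >= omega])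
   and vanishes off the axes [H_u], [V_u].  A lambda-geodesic leaving [u]
   through [u + e1] never meets [V_u] again, so passing to the lower path does
   not decrease its excess either: the lower path is a lambda-geodesic, and
   [pil], being downmost, lies below it, i.e. below [pi].  The second claim is
   the mirror image. *)

From Stdlib Require Import ZArith List Lia.
Import ListNotations.
Open Scope Z_scope.

Set Implicit Arguments.
Unset Strict Implicit.

Definition level (p : pt) : Z := fst p + snd p.

Definition same_level (p q : pt) : Prop := level p = level q.

Definition step (a b : pt) : Prop :=
  (fst b = fst a + 1 /\ snd b = snd a) \/ (fst b = fst a /\ snd b = snd a + 1).

Lemma step_iff (a b : pt) : b = padd a e1 \/ b = padd a e2 <-> step a b.
Proof.
  destruct a as [a1 a2], b as [b1 b2]; unfold padd, e1, e2, step; simpl.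
  split; intros [H|H].
  - left; inversion H; lia.
  - right; inversion H; lia.
  - left; destruct H; f_equal; lia.
  - right; destruct H; f_equal; lia.
Qed.

Lemma step_e1 (x : pt) : step x (padd x e1).
Proof. apply step_iff; left; reflexivity. Qed.

Lemma step_e2 (x : pt) : step x (padd x e2).
Proof. apply step_iff; right; reflexivity. Qed.

Lemma ple_level_eq (x p : pt) : ple x p -> level p = level x -> p = x.
Proof. destruct x, p; unfold ple, level; simpl; intros; f_equal; lia. Qed.

Lemma last_cons {A : Type} (l : list A) (a b : A) : last (b :: l) a = last l b.
Proof.
  revert a b; induction l as [|c l IH]; intros a b; [reflexivity|].
  change (last (c :: l) a = last (c :: l) b). rewrite !IH. reflexivity.
Qed.

Lemma dpath_nil (x y : pt) : ~ dpath x y [].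
Proof. intros [H _]; discriminate H. Qed.

Lemma dpath_head (x y a : pt) (l : list pt) : dpath x y (a :: l) -> a = x.
Proof. intros [H _]; injection H; auto. Qed.

Lemma dpath_single (x y : pt) : dpath x y [x] <-> x = y.
Proof. unfold dpath; simpl; intuition. Qed.

Lemma dpath_cons (x y b : pt) (l : list pt) :
  dpath x y (x :: b :: l) <-> step x b /\ dpath b y (b :: l).
Proof.
  unfold dpath; cbn [head steps_ok]; rewrite !last_cons, step_iff; intuition.
Qed.

Lemma dpath_box (x y : pt) (g : list pt) (p : pt) :
  dpath x y g -> In p g -> ple x p /\ ple p y.
Proof.
  revert x p; induction g as [|a l IH]; intros x p Hg Hp; [destruct Hp|].
  pose proof (dpath_head Hg); subst a.
  destruct l as [|b l].
  - apply dpath_single in Hg; subst. destruct Hp as [<-|[]]. unfold ple; lia.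
  - apply dpath_cons in Hg as [Hs Hg].
    destruct (IH b b Hg (or_introl eq_refl)) as [_ Hby].
    destruct Hp as [<-|Hp].
    + unfold ple, step in *; lia.
    + destruct (IH b p Hg Hp). unfold ple, step in *; lia.
Qed.

Lemma dpath_level_lt (x y b : pt) (l : list pt) :
  dpath x y (x :: b :: l) -> level x < level y.
Proof.
  intros Hg; apply dpath_cons in Hg as [Hs Hg].
  destruct (dpath_box Hg (or_introl eq_refl)). unfold ple, step, level in *; lia.
Qed.

Lemma dpath_in_tail (x y : pt) (l : list pt) (p : pt) :
  dpath x y (x :: l) -> In p l -> level x < level p.
Proof.
  destruct l as [|b l]; intros Hg Hp; [destruct Hp|].
  apply dpath_cons in Hg as [Hs Hg].
  destruct (dpath_box Hg Hp). unfold ple, step, level in *; lia.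
Qed.

Lemma dpath_monotone (x y : pt) (g : list pt) (p q : pt) :
  dpath x y g -> In p g -> In q g -> level p <= level q -> ple p q.
Proof.
  revert x; induction g as [|a l IH]; intros x Hg Hp Hq Hpq; [destruct Hp|].
  pose proof (dpath_head Hg); subst a.
  destruct Hp as [<-|Hp]; [exact (proj1 (dpath_box Hg Hq))|].
  pose proof (dpath_in_tail Hg Hp).
  destruct l as [|b l]; [destruct Hp|].
  destruct Hq as [<-|Hq]; [lia|].
  apply dpath_cons in Hg as [_ Hg]. exact (IH b Hg Hp Hq Hpq).
Qed.

Lemma dpath_past_second (x y z : pt) (g : list pt) (q : pt) :
  dpath x y g -> In z g -> step x z -> In q g -> q = x \/ ple z q.
Proof.
  intros Hg Hz Hxz Hq.
  destruct (dpath_box Hg Hq) as [Hxq _].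
  destruct (Z.eq_dec (level q) (level x)) as [Heq|Hne].
  - left; exact (ple_level_eq Hxq Heq).
  - right; apply (dpath_monotone Hg Hz Hq). unfold ple, step, level in *; lia.
Qed.

Lemma dpath_hits_level (x y : pt) (g : list pt) (s : Z) :
  dpath x y g -> level x <= s <= level y -> exists p, In p g /\ level p = s.
Proof.
  revert x; induction g as [|a l IH]; intros x Hg Hs; [destruct (dpath_nil Hg)|].
  pose proof (dpath_head Hg); subst a.
  destruct (Z.eq_dec s (level x)) as [->|Hne]; [exists x; split; [left|]; auto|].
  destruct l as [|b l]; [apply dpath_single in Hg; subst; lia|].
  apply dpath_cons in Hg as [Hxb Hg].
  destruct (IH b Hg) as [p [Hp Hps]]; [unfold step, level in *; lia|].
  exists p; split; [right|]; auto.
Qed.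

Lemma dpath_hits_column (x y : pt) (g : list pt) (c : Z) :
  dpath x y g -> fst x <= c <= fst y -> exists b, In (c, b) g.
Proof.
  revert x; induction g as [|a l IH]; intros x Hg Hc; [destruct (dpath_nil Hg)|].
  pose proof (dpath_head Hg); subst a.
  destruct (Z.eq_dec c (fst x)) as [->|Hne].
  { exists (snd x); left; destruct x; reflexivity. }
  destruct l as [|b l]; [apply dpath_single in Hg; subst; lia|].
  apply dpath_cons in Hg as [Hxb Hg].
  destruct (IH b Hg) as [y' Hy']; [unfold step in *; lia|].
  exists y'; right; auto.
Qed.

Lemma dpath_aligned (x y x' y' : pt) (g h : list pt) :
  dpath x y g -> dpath x' y' h -> level x = level x' -> level y = level y' ->
  Forall2 same_level g h.
Proof.
  revert x x' h; induction g as [|a l IH]; intros x x' h Hg Hh Hx Hy;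
    [destruct (dpath_nil Hg)|].
  destruct h as [|a' m]; [destruct (dpath_nil Hh)|].
  pose proof (dpath_head Hg); pose proof (dpath_head Hh); subst a a'.
  destruct l as [|b l], m as [|b' m].
  - repeat constructor; exact Hx.
  - apply dpath_single in Hg; pose proof (dpath_level_lt Hh); subst; lia.
  - apply dpath_single in Hh; pose proof (dpath_level_lt Hg); subst; lia.
  - apply dpath_cons in Hg as [Hs Hg], Hh as [Hs' Hh].
    constructor; [exact Hx|]. apply (IH b b'); auto. unfold step, level in *; lia.
Qed.

Fixpoint zip_with (f : pt -> pt -> pt) (g h : list pt) : list pt :=
  match g, h with
  | a :: g', b :: h' => f a b :: zip_with f g' h'
  | _, _ => []
  end.

Lemma zip_with_dpath (f : pt -> pt -> pt) (x y x' y' : pt) (g h : list pt) :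
  (forall p q p' q', level p = level q -> step p p' -> step q q' ->
     step (f p q) (f p' q')) ->
  dpath x y g -> dpath x' y' h -> Forall2 same_level g h ->
  dpath (f x x') (f y y') (zip_with f g h).
Proof.
  intros Hf Hg Hh HF; revert x x' Hg Hh.
  induction HF as [|a a' l m Haa HF IH]; intros x x' Hg Hh; [destruct (dpath_nil Hg)|].
  pose proof (dpath_head Hg); pose proof (dpath_head Hh); subst a a'.
  destruct l as [|b l], m as [|b' m]; inversion HF; subst.
  - apply dpath_single in Hg, Hh; subst. apply dpath_single; reflexivity.
  - apply dpath_cons in Hg as [Hs Hg], Hh as [Hs' Hh].
    apply dpath_cons; split; [apply Hf; auto|]. exact (IH b b' Hg Hh).
Qed.

Lemma zip_with_In (f : pt -> pt -> pt) (x y x' y' : pt) (g h : list pt) (p q : pt) :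
  dpath x y g -> dpath x' y' h -> Forall2 same_level g h ->
  In p g -> In q h -> level p = level q -> In (f p q) (zip_with f g h).
Proof.
  intros Hg Hh HF; revert x x' Hg Hh.
  induction HF as [|a a' l m Haa HF IH]; intros x x' Hg Hh Hp Hq Hpq; [destruct Hp|].
  pose proof (dpath_head Hg); pose proof (dpath_head Hh); subst a a'.
  unfold same_level in Haa.
  destruct Hp as [<-|Hp], Hq as [<-|Hq].
  - left; reflexivity.
  - pose proof (dpath_in_tail Hh Hq); lia.
  - pose proof (dpath_in_tail Hg Hp); lia.
  - right. destruct l as [|b l]; [destruct Hp|]. destruct m as [|b' m]; [destruct Hq|].
    apply dpath_cons in Hg as [_ Hg], Hh as [_ Hh]. exact (IH b b' Hg Hh Hp Hq Hpq).
Qed.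

Lemma bulk_weight_cons (w : pt -> Z) (a : pt) (g : list pt) :
  bulk_weight w (a :: g) = w a + bulk_weight w g.
Proof. reflexivity. Qed.

Lemma bulk_weight_zip_with_ge (w : pt -> Z) (f : pt -> pt -> pt) (g h : list pt) :
  Forall2 same_level g h ->
  (forall p q, In p g -> In q h -> level p = level q -> w q <= w (f p q)) ->
  bulk_weight w h <= bulk_weight w (zip_with f g h).
Proof.
  intros HF; induction HF as [|a b g h Hab HF IH]; intros Hw; [reflexivity|].
  cbn [zip_with]; rewrite !bulk_weight_cons.
  pose proof (Hw a b (or_introl eq_refl) (or_introl eq_refl) Hab).
  enough (bulk_weight w h <= bulk_weight w (zip_with f g h)) by lia.
  apply IH; intros p q Hp Hq; apply Hw; right; assumption.
Qed.

(* Of two vertices on one antidiagonal, [lower] picks the rightmost and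
   [upper] the leftmost. *)
Definition lower (p q : pt) : pt := if fst p <? fst q then q else p.
Definition upper (p q : pt) : pt := if fst p <? fst q then p else q.

Definition lower_path : list pt -> list pt -> list pt := zip_with lower.
Definition upper_path : list pt -> list pt -> list pt := zip_with upper.

Lemma lower_step (p q p' q' : pt) :
  level p = level q -> step p p' -> step q q' -> step (lower p q) (lower p' q').
Proof.
  unfold lower, step, level.
  destruct (Z.ltb_spec (fst p) (fst q)), (Z.ltb_spec (fst p') (fst q')); lia.
Qed.

Lemma upper_step (p q p' q' : pt) :
  level p = level q -> step p p' -> step q q' -> step (upper p q) (upper p' q').
Proof.
  unfold upper, step, level.
  destruct (Z.ltb_spec (fst p) (fst q)), (Z.ltb_spec (fst p') (fst q')); lia.
Qed.

Lemma lower_idem (p : pt) : lower p p = p.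
Proof. unfold lower; rewrite Z.ltb_irrefl; reflexivity. Qed.

Lemma upper_idem (p : pt) : upper p p = p.
Proof. unfold upper; rewrite Z.ltb_irrefl; reflexivity. Qed.

Lemma lower_path_dpath (x y : pt) (g h : list pt) :
  dpath x y g -> dpath x y h -> dpath x y (lower_path g h).
Proof.
  intros Hg Hh.
  pose proof (zip_with_dpath lower_step Hg Hh (dpath_aligned Hg Hh eq_refl eq_refl)) as H.
  rewrite !lower_idem in H; exact H.
Qed.

Lemma upper_path_dpath (x y : pt) (g h : list pt) :
  dpath x y g -> dpath x y h -> dpath x y (upper_path g h).
Proof.
  intros Hg Hh.
  pose proof (zip_with_dpath upper_step Hg Hh (dpath_aligned Hg Hh eq_refl eq_refl)) as H.
  rewrite !upper_idem in H; exact H.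
Qed.

Lemma bulk_weight_lower_upper (w : pt -> Z) (g h : list pt) :
  Forall2 same_level g h ->
  bulk_weight w (lower_path g h) + bulk_weight w (upper_path g h) =
  bulk_weight w g + bulk_weight w h.
Proof.
  intros HF; induction HF as [|a b g h _ _ IH]; [reflexivity|].
  unfold lower_path, upper_path in *; cbn [zip_with]; rewrite !bulk_weight_cons.
  assert (w (lower a b) + w (upper a b) = w a + w b)
    by (unfold lower, upper; destruct (fst a <? fst b); lia).
  lia.
Qed.

Definition left_of (g h : list pt) : Prop :=
  forall p q, In p g -> In q h -> level p = level q -> fst p <= fst q.

Lemma above_iff_left_of (x y : pt) (g h : list pt) :
  dpath x y g -> dpath x y h -> above g h <-> left_of g h.
Proof.
  intros Hg Hh; split.
  - intros Hab p q Hp Hq Hpq.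
    destruct (Z_le_gt_dec (fst p) (fst q)) as [|Hgt]; [assumption|exfalso].
    destruct (dpath_box Hg Hp) as [Hxp Hpy].
    destruct (dpath_hits_column (c := fst p) Hh) as [b' Hb']; [unfold ple in *; lia|].
    destruct p as [a b]; simpl in *.
    destruct (Hab a b b' Hp Hb') as [b'' [Hb'' Hle]].
    assert (Hmono : ple (a, b'') q)
      by (apply (dpath_monotone Hh Hb'' Hq); unfold level in *; simpl in *; lia).
    unfold ple in Hmono; simpl in Hmono; lia.
  - intros Hleft a b b' Hp Hp'.
    destruct (Z_le_gt_dec b' b) as [Hle|Hgt]; [exists b'; auto|].
    destruct (dpath_box Hg Hp) as [Hxp Hpy].
    destruct (dpath_hits_level (s := a + b) Hh) as [q [Hq Hqs]];
      [unfold ple, level in *; simpl in *; lia|].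
    pose proof (Hleft _ _ Hp Hq (eq_sym Hqs)) as Hqa.
    assert (Hmono : ple q (a, b'))
      by (apply (dpath_monotone Hh Hq Hp'); unfold level in *; simpl in *; lia).
    exists b; split; [|lia].
    replace (a, b) with q; [assumption|].
    destruct q as [q1 q2]; unfold ple, level in *; simpl in *; f_equal; lia.
Qed.

Lemma left_of_lower_path (x y : pt) (g h : list pt) :
  dpath x y g -> dpath x y h -> left_of (lower_path g h) h -> left_of g h.
Proof.
  intros Hg Hh Hleft p q Hp Hq Hpq.
  pose proof (zip_with_In lower Hg Hh (dpath_aligned Hg Hh eq_refl eq_refl) Hp Hq Hpq)
    as Hin.
  pose proof (Hleft _ _ Hin Hq) as H.
  unfold lower in *; destruct (Z.ltb_spec (fst p) (fst q)); [lia|]. auto.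
Qed.

Lemma left_of_upper_path (x y : pt) (g h : list pt) :
  dpath x y g -> dpath x y h -> left_of h (upper_path g h) -> left_of h g.
Proof.
  intros Hg Hh Hleft q p Hq Hp Hqp.
  pose proof (zip_with_In upper Hg Hh (dpath_aligned Hg Hh eq_refl eq_refl) Hp Hq
    (eq_sym Hqp)) as Hin.
  pose proof (Hleft _ _ Hq Hin) as H.
  unfold upper in *; destruct (Z.ltb_spec (fst p) (fst q)); [|lia]. auto.
Qed.

Lemma stationary_omH_ge (om L : pt -> Z) (z : pt) :
  stationary_config om L -> om z <= omH L z.
Proof. intros Hst; unfold omH; specialize (Hst z); lia. Qed.

Lemma stationary_omV_ge (om L : pt -> Z) (z : pt) :
  stationary_config om L -> om z <= omV L z.
Proof. intros Hst; unfold omV; specialize (Hst z); lia. Qed.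

Section Excess.

Variables (om L : pt -> Z) (u : pt).
Hypothesis stationary : stationary_config om L.

Definition excess (z : pt) : Z := lam_vertex om L u z - om z.

Lemma lam_weight_split (g : list pt) :
  lam_weight om L u g = bulk_weight om g + bulk_weight excess g.
Proof.
  induction g as [|z g IH]; [reflexivity|].
  change (lam_vertex om L u z + lam_weight om L u g =
          (om z + bulk_weight om g) + (excess z + bulk_weight excess g)).
  rewrite IH; unfold excess at 2; lia.
Qed.

Lemma excess_nonneg (z : pt) : z <> u -> 0 <= excess z.
Proof.
  intros Hne; unfold excess, lam_vertex.
  destruct (Z.eqb_spec (snd z) (snd u)), (Z.eqb_spec (fst z) (fst u)).
  - destruct z, u; simpl in *; subst; contradiction.
  - pose proof (stationary_omH_ge (z := z) stationary); lia.
  - pose proof (stationary_omV_ge (z := z) stationary); lia.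
  - lia.
Qed.

Lemma excess_interior (z : pt) : fst z <> fst u -> snd z <> snd u -> excess z = 0.
Proof.
  intros H1 H2; unfold excess, lam_vertex.
  destruct (Z.eqb_spec (snd z) (snd u)); [contradiction|].
  destruct (Z.eqb_spec (fst z) (fst u)); [contradiction|]. lia.
Qed.

Lemma excess_lower_ge (p q : pt) :
  ple u p -> ple u q -> level p = level q -> q = u \/ ple (padd u e1) q ->
  excess q <= excess (lower p q).
Proof.
  intros Hp Hq Hpq [->|Hq1].
  - rewrite (ple_level_eq Hp Hpq), lower_idem; lia.
  - unfold padd, e1, ple in Hq1; simpl in Hq1.
    unfold lower; destruct (Z.ltb_spec (fst p) (fst q)) as [|Hqp]; [lia|].
    destruct (Z.eq_dec (snd q) (snd u)) as [Hsq|Hsq].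
    + replace p with q; [lia|].
      destruct p, q; unfold ple, level in *; simpl in *; f_equal; lia.
    + rewrite (excess_interior (z := q)) by lia. apply excess_nonneg.
      intros ->; unfold ple, level in *; lia.
Qed.

Lemma excess_upper_ge (p q : pt) :
  ple u p -> ple u q -> level p = level q -> q = u \/ ple (padd u e2) q ->
  excess q <= excess (upper p q).
Proof.
  intros Hp Hq Hpq [->|Hq2].
  - rewrite (ple_level_eq Hp Hpq), upper_idem; lia.
  - unfold padd, e2, ple in Hq2; simpl in Hq2.
    unfold upper; destruct (Z.ltb_spec (fst p) (fst q)) as [Hpq'|]; [|lia].
    rewrite (excess_interior (z := q)) by (unfold ple in *; lia). apply excess_nonneg.
    intros ->; unfold ple, level in *; lia.
Qed.

Lemma lam_geodesic_exchange (v : pt) (pi pil g h : list pt) :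
  geodesic om u v pi -> lam_geodesic om L u v pil ->
  dpath u v g -> dpath u v h ->
  bulk_weight om g + bulk_weight om h = bulk_weight om pi + bulk_weight om pil ->
  bulk_weight excess pil <= bulk_weight excess h ->
  lam_geodesic om L u v h.
Proof.
  intros [_ Gpi] [_ Gpil] Hg Hh Hsum Hexc; split; [exact Hh|].
  intros g' Hg'. specialize (Gpi g Hg). specialize (Gpil g' Hg').
  rewrite !lam_weight_split in *; lia.
Qed.

Lemma lower_path_lam_geodesic (v : pt) (pi pil : list pt) :
  geodesic om u v pi -> lam_geodesic om L u v pil -> In (padd u e1) pil ->
  lam_geodesic om L u v (lower_path pi pil).
Proof.
  intros Gpi Gpil He1.
  pose proof (proj1 Gpi) as Hpi; pose proof (proj1 Gpil) as Hpil.
  pose proof (dpath_aligned Hpi Hpil eq_refl eq_refl) as Haligned.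
  apply (lam_geodesic_exchange Gpi Gpil (upper_path_dpath Hpi Hpil)
           (lower_path_dpath Hpi Hpil)).
  - rewrite Z.add_comm; exact (bulk_weight_lower_upper om Haligned).
  - apply (bulk_weight_zip_with_ge Haligned); intros p q Hp Hq Hpq.
    apply excess_lower_ge; [exact (proj1 (dpath_box Hpi Hp))
      | exact (proj1 (dpath_box Hpil Hq)) | exact Hpq
      | exact (dpath_past_second Hpil He1 (step_e1 u) Hq)].
Qed.

Lemma upper_path_lam_geodesic (v : pt) (pi pil : list pt) :
  geodesic om u v pi -> lam_geodesic om L u v pil -> In (padd u e2) pil ->
  lam_geodesic om L u v (upper_path pi pil).
Proof.
  intros Gpi Gpil He2.
  pose proof (proj1 Gpi) as Hpi; pose proof (proj1 Gpil) as Hpil.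
  pose proof (dpath_aligned Hpi Hpil eq_refl eq_refl) as Haligned.
  apply (lam_geodesic_exchange Gpi Gpil (lower_path_dpath Hpi Hpil)
           (upper_path_dpath Hpi Hpil)).
  - exact (bulk_weight_lower_upper om Haligned).
  - apply (bulk_weight_zip_with_ge Haligned); intros p q Hp Hq Hpq.
    apply excess_upper_ge; [exact (proj1 (dpath_box Hpi Hp))
      | exact (proj1 (dpath_box Hpil Hq)) | exact Hpq
      | exact (dpath_past_second Hpil He2 (step_e2 u) Hq)].
Qed.

End Excess.

Theorem lemma3p4 :
  forall (om L : pt -> Z), stationary_config om L ->
  forall (u v : pt), ple u v ->
    (forall pi pil : list pt,
       downmost_geod om u v pi -> downmost_lam_geod om L u v pil ->
       In (padd u e1) pil -> above pi pil) /\
    (forall pi pil : list pt,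
       upmost_geod om u v pi -> upmost_lam_geod om L u v pil ->
       In (padd u e2) pil -> above pil pi).
Proof.
  intros om L Hst u v _; split.
  - intros pi pil [Gpi _] [Gpil Hdown] He1.
    pose proof (proj1 Gpi) as Hpi; pose proof (proj1 Gpil) as Hpil.
    pose proof (lower_path_dpath Hpi Hpil) as Hlow.
    apply (above_iff_left_of Hpi Hpil), (left_of_lower_path Hpi Hpil),
      (above_iff_left_of Hlow Hpil), Hdown.
    exact (lower_path_lam_geodesic Hst Gpi Gpil He1).
  - intros pi pil [Gpi _] [Gpil Hup] He2.
    pose proof (proj1 Gpi) as Hpi; pose proof (proj1 Gpil) as Hpil.
    pose proof (upper_path_dpath Hpi Hpil) as Hhigh.
    apply (above_iff_left_of Hpil Hpi), (left_of_upper_path Hpi Hpil),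
      (above_iff_left_of Hpil Hhigh), Hup.
    exact (upper_path_lam_geodesic Hst Gpi Gpil He2).
Qed.
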